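(* Let $M\ge2$ be an integer and consider the class of random variables $X$ whose distribution is unimodal with support contained in $\{1,\dots,M\}$. Within this class, $\nu_1(X)\le\frac{M-1}{4}$, and equality holds if and only if $X$ is uniformly distributed on $\{1,\dots,M\}$.
   Context: For a real random variable $X$, its Lévy concentration function is $Q_X(\varepsilon)=\sup_{x_0\in\mathbb{R}}\Pr\{X\in[x_0,x_0+\varepsilon]\}$, $\varepsilon>0$, and $Q_X(0):=\lim_{\varepsilon\downarrow0}Q_X(\varepsilon)=\max_k\Pr(X=k)$. For integer-valued $X$, $\nu_1(X)=\frac12\int_0^\infty(1-Q_X(\varepsilon))\,d\varepsilon=\frac12\sum_{k=0}^\infty(1-Q_X(k))$. A distribution $p$ on the integers is unimodal if there exists an integer $m$ with $p_k\ge p_{k-1}$ for all $k\le m$ and $p_{k+1}\le p_k$ for all $k\ge m$. *)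

From HB Require Import structures.
From mathcomp Require Import all_boot all_order all_algebra.
From mathcomp Require Import all_classical all_reals all_analysis.
Set Implicit Arguments. Unset Strict Implicit. Unset Printing Implicit Defensive.
Import Order.TTheory GRing.Theory Num.Theory.
Local Open Scope ring_scope.
Local Open Scope classical_set_scope.

(* A probability mass function p on the integers: p k = Pr(X = k). *)
Definition is_pmf_supp (R : realType) (M : nat) (p : int -> R) : Prop :=
  (forall k, 0 <= p k) /\
  (forall k : int, ~ (1 <= k <= M%:Z) -> p k = 0) /\
  \sum_(0 <= i < M.+1) p i%:Z = 1.

Definition unimodal (R : realType) (p : int -> R) : Prop :=
  exists m : int, (forall k : int, k <= m -> p (k - 1) <= p k) /\
                  (forall k : int, m <= k -> p (k + 1) <= p k).

Definition window_mass (R : realType) (p : int -> R) (x0 : int) (k : nat) : R :=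
  \sum_(0 <= i < k.+1) p (x0 + i%:Z).

(* Levy concentration function at integer eps = k (sup over windows; for an
   integer-valued X, integer left endpoints suffice). *)
Definition levyQ (R : realType) (p : int -> R) (k : nat) : R :=
  sup [set y | exists x0 : int, y = window_mass p x0 k].

Definition nu1 (R : realType) (p : int -> R) : R :=
  2^-1 * limn (fun n => \sum_(0 <= k < n) (1 - levyQ p k)).

From HB Require Import structures.
From mathcomp Require Import all_boot all_order all_algebra.
From mathcomp Require Import all_classical all_reals all_analysis.
From mathcomp Require Import zify ring lra.
Import Order.TTheory GRing.Theory Num.Theory.
Import numFieldNormedType.Exports.

Set Implicit Arguments.
Unset Strict Implicit.
Unset Printing Implicit Defensive.
Local Open Scope ring_scope.

(* Removing the smaller endpoint of a unimodal block of n+1 masses leaves a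
   block of n masses whose mean is at least as large, because that endpoint
   is a minimum of the block.  Iterating down to length k+1 shows that for a
   unimodal distribution on {1..M} some window of k+1 consecutive points
   carries mass at least (k+1)/M, i.e. Q(k) >= (k+1)/M, while Q(k) = 1 for
   k >= M-1.  Hence nu_1 = 1/2 sum_{k<M-1} (1 - Q(k)) <= (M-1)/4.  Equality
   forces Q(0) = max_k P(X = k) = 1/M, which for a distribution on M points
   means uniformity; conversely the uniform law has Q(k) = (k+1)/M. *)

Lemma ler_sum_nat_widen (R : numDomainType) (f : nat -> R) (n m : nat) :
  (forall i, 0 <= f i) -> (n <= m)%N ->
  \sum_(0 <= i < n) f i <= \sum_(0 <= i < m) f i.
Proof.
move=> f_ge0 le_nm; rewrite (@big_cat_nat _ _ _ n 0 m) //= lerDl.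
by apply: sumr_ge0 => i _.
Qed.

Lemma ler_mulrn_sum_nat (R : numDomainType) (c : R) (f : nat -> R) (n : nat) :
  (forall i, (i < n)%N -> c <= f i) -> n%:R * c <= \sum_(0 <= i < n) f i.
Proof.
move=> c_le; rewrite mulr_natl -[n in c *+ n]subn0 -sumr_const_nat.
by apply: ler_sum_nat => i /andP[_ /c_le].
Qed.

Lemma ler_mean_addl (R : realFieldType) (n a S : R) :
  0 < n -> n * a <= S -> (a + S) / (n + 1) <= S / n.
Proof.
move=> n_gt0 naS; have n1_gt0 : 0 < n + 1 by rewrite ltr_wpDr.
rewrite ler_pdivrMr // mulrAC ler_pdivlMr //; nra.
Qed.

Lemma sum_succ_nat (R : numFieldType) (m : nat) :
  \sum_(0 <= k < m) (k.+1%:R : R) = m%:R * (m%:R + 1) / 2.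
Proof.
elim: m => [|m IH]; first by rewrite big_geq // !mul0r.
by rewrite big_nat_recr //= IH -!natr1; field.
Qed.

Lemma sum_uniform_deficit (R : numFieldType) (M : nat) : (0 < M)%N ->
  \sum_(0 <= k < M.-1) (1 - k.+1%:R / M%:R) = (M%:R - 1) / 2 :> R.
Proof.
case: M => // n _; rewrite sumrB sumr_const_nat subn0 -mulr_suml sum_succ_nat.
by rewrite /= -natr1; field; rewrite addrC natr1 pnatr_eq0.
Qed.

Section UnimodalWindows.
Variables (R : realType) (p : int -> R).

Lemma nondecreasing_upto (m : int) :
  (forall k, k <= m -> p (k - 1) <= p k) ->
  forall (d : nat) (a : int), a + d%:Z <= m -> p a <= p (a + d%:Z).
Proof.
move=> p_up; elim=> [|d IH] a le_adm; first by rewrite addr0.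
apply: le_trans (IH a _) _; first lia.
have := p_up _ le_adm.
by rewrite (_ : a + d.+1%:Z - 1 = a + d%:Z) //; lia.
Qed.

Lemma nonincreasing_from (m : int) :
  (forall k, m <= k -> p (k + 1) <= p k) ->
  forall (d : nat) (a : int), m <= a -> p (a + d%:Z) <= p a.
Proof.
move=> p_down; elim=> [|d IH] a le_ma; first by rewrite addr0.
apply: le_trans (IH a le_ma).
have := p_down (a + d%:Z) ltac:(lia).
by rewrite (_ : a + d%:Z + 1 = a + d.+1%:Z) //; lia.
Qed.

Hypothesis p_unimodal : unimodal p.

Lemma unimodal_ge_min (lo : int) (d i : nat) : (i <= d)%N ->
  Num.min (p lo) (p (lo + d%:Z)) <= p (lo + i%:Z).
Proof.
have [m [p_up p_down]] := p_unimodal; move=> le_id; rewrite ge_min.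
have [le_m|lt_m] := lerP (lo + i%:Z) m.
  by rewrite (nondecreasing_upto p_up le_m).
rewrite (_ : lo + d%:Z = lo + i%:Z + (d - i)%N%:Z); last lia.
by rewrite (nonincreasing_from p_down) ?orbT //; lia.
Qed.

Lemma unimodal_window_ge_mean (n k : nat) (lo : int) : (k < n)%N ->
  exists x0, k.+1%:R * ((\sum_(0 <= i < n) p (lo + i%:Z)) / n%:R)
             <= window_mass p x0 k.
Proof.
elim: n lo => [//|n IH] lo; rewrite ltnS leq_eqVlt => /orP[/eqP-> | lt_kn].
  by exists lo; rewrite mulrC divfK ?pnatr_eq0.
have n_gt0 : (0 < n)%N by apply: leq_ltn_trans lt_kn.
suff [lo' [a [split_sum mean_a]]] : exists lo' a,
    \sum_(0 <= i < n.+1) p (lo + i%:Z) = a + \sum_(0 <= i < n) p (lo' + i%:Z)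
    /\ n%:R * a <= \sum_(0 <= i < n) p (lo' + i%:Z).
  have [x0 win] := IH lo' lt_kn; exists x0; apply: le_trans win.
  rewrite split_sum ler_wpM2l ?ler0n // -natr1.
  by apply: ler_mean_addl; rewrite ?ltr0n.
have [le_lo|lt_hi] := lerP (p lo) (p (lo + n%:Z)).
- exists (lo + 1), (p lo); split.
    rewrite big_nat_recl // addr0; congr (_ + _).
    by apply: eq_bigr => i _; congr p; lia.
  apply: ler_mulrn_sum_nat => i lt_in.
  rewrite (_ : lo + 1 + i%:Z = lo + i.+1%:Z); last lia.
  by rewrite -(min_l le_lo) unimodal_ge_min.
- exists lo, (p (lo + n%:Z)); split; first by rewrite big_nat_recr //= addrC.
  apply: ler_mulrn_sum_nat => i lt_in.
  by rewrite -(min_r (ltW lt_hi)) unimodal_ge_min // ltnW.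
Qed.

End UnimodalWindows.

Lemma levyQ_le_ub (R : realType) (p : int -> R) (k : nat) (b : R) :
  (forall x0, window_mass p x0 k <= b) -> levyQ p k <= b.
Proof.
move=> win_le; apply: ge_sup; first by exists (window_mass p 0 k), 0.
by move=> _ [x0 ->].
Qed.

Section SupportedPmf.
Variables (R : realType) (M : nat) (p : int -> R).
Hypothesis p_pmf : is_pmf_supp M p.

Lemma window_sum_nat_le1 (a n : nat) : \sum_(0 <= i < n) p (a%:Z + i%:Z) <= 1.
Proof.
have [p_ge0 [p_out p_sum1]] := p_pmf.
have -> : \sum_(0 <= i < n) p (a%:Z + i%:Z) = \sum_(a <= i < a + n) p i%:Z.
  by rewrite (big_addn 0 _ a) addKn; apply: eq_bigr => i _; congr p; lia.
pose N := maxn (a + n) M.+1.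
apply: (@le_trans _ _ (\sum_(0 <= i < a + n) p i%:Z)).
  rewrite [X in _ <= X](@big_cat_nat _ _ _ a) ?leq_addr //= lerDr.
  by apply: sumr_ge0 => i _.
apply: (@le_trans _ _ (\sum_(0 <= i < N) p i%:Z)).
  exact: ler_sum_nat_widen (fun i => p_ge0 _) (leq_maxl _ _).
rewrite (@big_cat_nat _ _ _ M.+1) ?leq_maxr //= p_sum1.
rewrite big_nat_cond big1 ?addr0 //.
by move=> i /andP[/andP[le_Mi _] _]; apply: p_out; lia.
Qed.

Lemma window_sum_le1 (x0 : int) (n : nat) : \sum_(0 <= i < n) p (x0 + i%:Z) <= 1.
Proof.
have [p_ge0 [p_out _]] := p_pmf.
case: x0 => [a|a]; first exact: window_sum_nat_le1.
(* Lengthen the window by a.+1 points: its first a.+1 points are <= 0, where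
   p vanishes, and the remaining ones form a window starting at 0. *)
apply: (@le_trans _ _ (\sum_(0 <= i < a.+1 + n) p (Negz a + i%:Z))).
  by apply: ler_sum_nat_widen => //; rewrite leq_addl.
rewrite (@big_cat_nat _ _ _ a.+1) ?leq_addr //=.
rewrite big_nat_cond big1 ?add0r; last first.
  by move=> i /andP[/andP[_ lt_ia] _]; apply: p_out; rewrite NegzE; lia.
rewrite (big_addn 0 _ a.+1) addKn.
rewrite (eq_bigr (fun i => p (0%N%:Z + i%:Z))) ?window_sum_nat_le1 //.
by move=> i _; congr p; rewrite NegzE; lia.
Qed.

Lemma window_mass_le_levyQ (x0 : int) (k : nat) :
  window_mass p x0 k <= levyQ p k.
Proof.
apply: ub_le_sup; last by exists x0.
by exists 1 => _ [x ->]; exact: window_sum_le1.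
Qed.

Lemma pmf_sum_from1 : \sum_(0 <= i < M) p (1 + i%:Z) = 1.
Proof.
have [_ [p_out <-]] := p_pmf.
rewrite big_nat_recl // p_out ?add0r //; apply: eq_bigr => i _; congr p; lia.
Qed.

Lemma levyQ_ge_uniform (k : nat) : unimodal p -> (k < M)%N ->
  k.+1%:R / M%:R <= levyQ p k.
Proof.
move=> p_unimodal lt_kM.
have [x0 win] := unimodal_window_ge_mean p_unimodal 1 lt_kM.
rewrite pmf_sum_from1 mul1r in win.
exact: le_trans win (window_mass_le_levyQ x0 k).
Qed.

Lemma levyQ_eq1 (k : nat) : (M <= k.+1)%N -> levyQ p k = 1.
Proof.
move=> le_Mk; apply/le_anti/andP; split.
  by apply: levyQ_le_ub => x0; exact: window_sum_le1.
rewrite -{1}pmf_sum_from1; apply: le_trans (window_mass_le_levyQ 1 k).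
by apply: (@ler_sum_nat_widen _ (fun i => p (1 + i%:Z))) => // i; case: p_pmf.
Qed.

Lemma nu1_eq_sum : nu1 p = 2^-1 * \sum_(0 <= k < M.-1) (1 - levyQ p k).
Proof.
rewrite /nu1; congr (_ * _); apply: lim_near_cst => //.
exists M.-1 => // m /= le_Mm; rewrite (@big_cat_nat _ _ _ M.-1 0 m) //=.
rewrite -[RHS]addr0; congr (_ + _).
rewrite big_nat_cond big1 // => k /andP[/andP[le_Mk _] _].
by rewrite levyQ_eq1 ?subrr //; lia.
Qed.

Lemma uniform_of_levyQ0 : levyQ p 0 <= M%:R^-1 ->
  forall k : int, 1 <= k <= M%:Z -> p k = M%:R^-1.
Proof.
move=> Q0_le; have [p_ge0 [p_out _]] := p_pmf.
have M_neq0 : M%:R != 0 :> R.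
  rewrite pnatr_eq0; apply/eqP => M0.
  by move: pmf_sum_from1; rewrite M0 big_geq // => /esym/eqP; rewrite oner_eq0.
have p_le j : p j <= M%:R^-1.
  apply: le_trans Q0_le.
  by have := window_mass_le_levyQ j 0; rewrite /window_mass big_nat1 addr0.
have deficit0 : \sum_(0 <= i < M) (M%:R^-1 - p (1 + i%:Z)) = 0.
  rewrite sumrB sumr_const_nat subn0 pmf_sum_from1.
  by rewrite -[_ *+ M]mulr_natr mulVf ?subrr.
rewrite big_mkord in deficit0.
case=> [j|j] /andP[le1j lejM]; last by move: le1j; rewrite NegzE; lia.
have lt_jM : (j.-1 < M)%N by lia.
have deficit_ge0 (i : 'I_M) : xpredT i -> 0 <= M%:R^-1 - p (1 + i%:Z).
  by rewrite subr_ge0.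
have /eqP := psumr_eq0P deficit_ge0 deficit0 (i := Ordinal lt_jM) isT.
by rewrite subr_eq0 => /eqP ->; congr p => /=; lia.
Qed.

Lemma levyQ_uniform (k : nat) :
  (forall j : int, 1 <= j <= M%:Z -> p j = M%:R^-1) -> (k < M)%N ->
  levyQ p k = k.+1%:R / M%:R.
Proof.
have [_ [p_out _]] := p_pmf; move=> p_unif lt_kM.
have p_le j : p j <= M%:R^-1.
  case: (boolP (1 <= j <= M%:Z)) => [/p_unif -> // | out_j].
  by rewrite p_out ?invr_ge0 ?ler0n //; apply/negP.
have mass : \sum_(0 <= i < k.+1) M%:R^-1 = k.+1%:R / M%:R :> R.
  by rewrite sumr_const_nat subn0 mulr_natl.
apply/le_anti/andP; split.
  by apply: levyQ_le_ub => x0; rewrite -mass; apply: ler_sum_nat => i _.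
rewrite -mass; apply: le_trans (window_mass_le_levyQ 1 k).
by apply: ler_sum_nat => i /andP[_ lt_ik]; rewrite p_unif //; lia.
Qed.

End SupportedPmf.

Theorem mainTheorem16 (R : realType) (M : nat) (p : int -> R) :
  (2 <= M)%N -> is_pmf_supp M p -> unimodal p ->
  nu1 p <= (M%:R - 1) / 4 /\
  (nu1 p = (M%:R - 1) / 4 <->
     forall k : int, 1 <= k <= M%:Z -> p k = M%:R^-1).
Proof.
move=> M_ge2 p_pmf p_unimodal.
pose gap k := levyQ p k - k.+1%:R / M%:R.
have gap_ge0 k : (k < M.-1)%N -> 0 <= gap k.
  by move=> lt_k; rewrite subr_ge0 levyQ_ge_uniform //; lia.
have nu1_gap : nu1 p = (M%:R - 1) / 4 - 2^-1 * \sum_(0 <= k < M.-1) gap k.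
  rewrite (nu1_eq_sum p_pmf).
  rewrite (eq_bigr (fun k => (1 - k.+1%:R / M%:R) - gap k)); last first.
    by move=> k _; rewrite /gap; ring.
  by rewrite sumrB sum_uniform_deficit; [field | lia].
have [tail gap_split tail_ge0] :
    exists2 t, \sum_(0 <= k < M.-1) gap k = gap 0%N + t & 0 <= t.
  rewrite (_ : M.-1 = M.-2.+1); last lia.
  exists (\sum_(0 <= k < M.-2) gap k.+1); first by rewrite big_nat_recl.
  rewrite big_nat_cond; apply: sumr_ge0 => k /andP[/andP[_ lt_k] _].
  by apply: gap_ge0; lia.
have gap0_ge0 : 0 <= gap 0%N by apply: gap_ge0; lia.
split; first by rewrite nu1_gap gap_split; lra.
split=> [nu1_eq | p_unif].
- apply: uniform_of_levyQ0 => //.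
  have : gap 0%N <= 0 by move: nu1_eq; rewrite nu1_gap gap_split; lra.
  by rewrite subr_le0 mul1r.
- rewrite nu1_gap big_nat_cond big1 ?mulr0 ?subr0 // => k /andP[/andP[_ lt_k] _].
  by rewrite /gap (levyQ_uniform p_pmf) ?subrr //; lia.
Qed.
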